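(* Let $n\ge1$ and $a_0,a_1,b_0,b_1\in R$. The sections $s_0=a_0(x^n,z^n)^T+a_1(y^n,w^n)^T$ and $s_1=b_0(x^n,z^n)^T+b_1(y^n,w^n)^T$ generate $\mathcal{P}_n$ if and only if there exist $U_x,V_x,U_w,V_w\in R$ with $$U_x(x^na_0+y^na_1)+V_x(x^nb_0+y^nb_1)+U_w(z^na_0+w^na_1)+V_w(z^nb_0+w^nb_1)=1.$$ Similarly, the sections $s_0=a_0(x^n,y^n)^T+a_1(z^n,w^n)^T$ and $s_1=b_0(x^n,y^n)^T+b_1(z^n,w^n)^T$ generate $\mathcal{Q}_n$ if and only if there exist $U_x,V_x,U_w,V_w\in R$ with $$U_x(x^na_0+z^na_1)+V_x(x^nb_0+z^nb_1)+U_w(y^na_0+w^na_1)+V_w(y^nb_0+w^nb_1)=1.$$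
   Context: Let $k$ be a field and $R=k[x,y,z,w]/(x+w-1,\,xw-yz)$. For $n\ge1$ let $\mathcal{P}_n\subseteq R^2$ be the $R$-submodule generated by $(x^n,z^n)^T$ and $(y^n,w^n)^T$, and $\mathcal{Q}_n\subseteq R^2$ the submodule generated by $(x^n,y^n)^T$ and $(z^n,w^n)^T$. ''Generate'' means the two sections generate the $R$-module. *)

(* R = k[x,y,z,w]/(x+w-1, xw-yz) built as the quotient of
   {mpoly k[4]} by the (classically decided) ideal generated by the two relations. *)
From HB Require Import structures.
From mathcomp Require Import all_boot all_order all_algebra.
From mathcomp Require Import generic_quotient ring_quotient.
From mathcomp Require Import mpoly.
From Stdlib Require Import ClassicalEpsilon.
Set Implicit Arguments.
Unset Strict Implicit.
Unset Printing Implicit Defensive.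
Import GRing.Theory.
Local Open Scope ring_scope.
Local Open Scope quotient_scope.

Section Ring.
Variable k : fieldType.
Local Notation P := {mpoly k[4]}.

Definition px : P := 'X_(@Ordinal 4 0 isT).
Definition py : P := 'X_(@Ordinal 4 1 isT).
Definition pz : P := 'X_(@Ordinal 4 2 isT).
Definition pw : P := 'X_(@Ordinal 4 3 isT).

Definition in_relI (p : P) : Prop :=
  exists q1 q2 : P, p = q1 * (px + pw - 1) + q2 * (px * pw - py * pz).

Definition relI : pred P :=
  fun p => if excluded_middle_informative (in_relI p) then true else false.

Lemma relIP p : reflect (in_relI p) (p \in relI).
Proof.
rewrite unfold_in /relI; case: excluded_middle_informative => h.
  by apply: ReflectT. by apply: ReflectF.
Qed.

Lemma relI_closed : idealr_closed relI.
Proof.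
split.
- by apply/relIP; exists 0, 0; rewrite !mul0r addr0.
- apply/relIP => -[q1 [q2 e]].
  pose v : 'I_4 -> k := fun i => if val i == 0%N then 1 else 0.
  have := congr1 (meval v) e.
  rewrite meval1 mevalD !mevalM !mevalB mevalD meval1 !mevalM !mevalXU /v /=.
  rewrite ?(mul0r,mulr0,add0r,addr0,mul1r,mulr1,subrr,subr0) => /eqP.
  by rewrite oppr0 mulr0 oner_eq0.
- move=> a u v /relIP [q1 [q2 eu]] /relIP [r1 [r2 ev]]; apply/relIP.
  exists (a * q1 + r1), (a * q2 + r2); rewrite eu ev.
  by rewrite !mulrDl !mulrDr !mulrA; rewrite addrACA.
Qed.

HB.instance Definition _ := isIdealr.Build P relI relI_closed.

End Ring.

Definition Rq (k : fieldType) := {ideal_quot (@relI k : idealr _)}.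
HB.instance Definition _ (k : fieldType) := GRing.ComNzRing.on (Rq k).
HB.instance Definition _ (k : fieldType) := EqQuotient.on (Rq k).

Definition xq (k : fieldType) : Rq k := \pi_(Rq k) (@px k).
Definition yq (k : fieldType) : Rq k := \pi_(Rq k) (@py k).
Definition zq (k : fieldType) : Rq k := \pi_(Rq k) (@pz k).
Definition wq (k : fieldType) : Rq k := \pi_(Rq k) (@pw k).

Definition vec2 (A : comNzRingType) (a b : A) : 'cV[A]_2 :=
  \col_(i < 2) (if val i == 0%N then a else b).

Definition span2 (A : comNzRingType) (u v : 'cV[A]_2) : 'cV[A]_2 -> Prop :=
  fun t => exists c d : A, t = c *: u + d *: v.

Definition generates2 (A : comNzRingType) (s0 s1 u v : 'cV[A]_2) : Prop :=
  forall t, span2 s0 s1 t <-> span2 u v t.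

Definition Pgen1 k n := vec2 (xq k ^+ n) (zq k ^+ n).
Definition Pgen2 k n := vec2 (yq k ^+ n) (wq k ^+ n).
Definition Qgen1 k n := vec2 (xq k ^+ n) (yq k ^+ n).
Definition Qgen2 k n := vec2 (zq k ^+ n) (wq k ^+ n).

(** If s0 and s1 generate, then u and v are combinations of s0 and s1, so
    the first entry x^n of u and the second entry w^n of v lie in the ideal
    generated by the entries of s0 and s1; x^n and w^n are comaximal because
    x + w = 1.  Conversely the generator matrix [u v] has determinant
    x^n w^n - y^n z^n = 0, so every combination t of u and v satisfies
    u1 t0 = u0 t1 and v1 t0 = v0 t1; multiplying a unit combination of the
    entries of s0 and s1 by the entries of u and v therefore writes u and v
    as combinations of s0 and s1. *)
From HB Require Import structures.
From mathcomp Require Import all_boot all_order all_algebra.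
From mathcomp Require Import generic_quotient ring_quotient mpoly.
From mathcomp Require Import ring.
Set Implicit Arguments.
Unset Strict Implicit.
Unset Printing Implicit Defensive.
Import GRing.Theory.
Local Open Scope ring_scope.
Local Open Scope quotient_scope.

Definition comaximal (A : comNzRingType) (a b : A) : Prop :=
  exists p q : A, p * a + q * b = 1.

Section Comaximal.
Variable A : comNzRingType.
Implicit Types a b : A.

Lemma comaximalC a b : comaximal a b -> comaximal b a.
Proof. by move=> [p [q e]]; exists q, p; rewrite addrC. Qed.

Lemma comaximal_exprr a b m : comaximal a b -> comaximal a (b ^+ m).
Proof.
move=> [p [q e]]; elim: m => [|m [p' [q' e']]].
  by exists 0, 1; rewrite mul0r add0r mulr1.
exists (p * p' * a + p * q' * b ^+ m + q * p' * b), (q * q').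
by rewrite -[RHS](mulr1 1) -{1}e -e' exprSr; ring.
Qed.

Lemma comaximal_expr a b m n : comaximal a b -> comaximal (a ^+ m) (b ^+ n).
Proof. by move/(comaximal_exprr n)/comaximalC/(comaximal_exprr m)/comaximalC. Qed.

End Comaximal.

Section Span2.
Variable A : comNzRingType.

Lemma vec2_lincomb c d (s0 s1 t0 t1 : A) :
  c *: vec2 s0 s1 + d *: vec2 t0 t1 = vec2 (c * s0 + d * t0) (c * s1 + d * t1).
Proof. by apply/matrixP => i j; rewrite !mxE; case: ifP. Qed.

Lemma vec2_inj (s0 s1 t0 t1 : A) : vec2 s0 s1 = vec2 t0 t1 -> s0 = t0 /\ s1 = t1.
Proof.
move=> e; split.
- by have := congr1 (fun t : 'cV[A]_2 => t 0 0) e; rewrite !mxE.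
- by have := congr1 (fun t : 'cV[A]_2 => t 1 0) e; rewrite !mxE.
Qed.

Lemma span2_lincomb (s0 s1 t0 t1 : 'cV[A]_2) c d :
  span2 s0 s1 t0 -> span2 s0 s1 t1 -> span2 s0 s1 (c *: t0 + d *: t1).
Proof.
move=> [c0 [d0 ->]] [c1 [d1 ->]].
exists (c * c0 + d * c1), (c * d0 + d * d1).
by rewrite !scalerDr !scalerA !scalerDl addrACA.
Qed.

Lemma span2_left (s t : 'cV[A]_2) : span2 s t s.
Proof. by exists 1, 0; rewrite scale1r scale0r addr0. Qed.

Lemma span2_right (s t : 'cV[A]_2) : span2 s t t.
Proof. by exists 0, 1; rewrite scale1r scale0r add0r. Qed.

Lemma generates2_lincombP (a0 a1 b0 b1 : A) (u v : 'cV[A]_2) :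
  let s0 := a0 *: u + a1 *: v in let s1 := b0 *: u + b1 *: v in
  generates2 s0 s1 u v <-> span2 s0 s1 u /\ span2 s0 s1 v.
Proof.
move=> s0 s1; split=> [gen | [su sv] t].
  by split; apply/gen; [apply: span2_left | apply: span2_right].
have s0uv : span2 u v s0 := span2_lincomb a0 a1 (span2_left u v) (span2_right u v).
have s1uv : span2 u v s1 := span2_lincomb b0 b1 (span2_left u v) (span2_right u v).
by split=> -[c [d ->]]; apply: span2_lincomb.
Qed.

End Span2.

Section TwoGenerators.
Variables (A : comNzRingType) (u0 u1 v0 v1 a0 a1 b0 b1 : A).

Local Notation s0 := (a0 *: vec2 u0 u1 + a1 *: vec2 v0 v1).
Local Notation s1 := (b0 *: vec2 u0 u1 + b1 *: vec2 v0 v1).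
Local Notation entries_comaximal :=
  (exists Ux Vx Uw Vw : A,
      Ux * (u0 * a0 + v0 * a1) + Vx * (u0 * b0 + v0 * b1)
      + Uw * (u1 * a0 + v1 * a1) + Vw * (u1 * b0 + v1 * b1) = 1).

Lemma entries_comaximal_of_span2 :
  comaximal u0 v1 -> span2 s0 s1 (vec2 u0 u1) -> span2 s0 s1 (vec2 v0 v1) ->
  entries_comaximal.
Proof.
move=> [p [q pq1]] [c [d su]] [c' [d' sv]].
move: su sv; rewrite !vec2_lincomb => /vec2_inj[u0E _] /vec2_inj[_ v1E].
exists (p * c), (p * d), (q * c'), (q * d').
by rewrite -pq1 [in RHS]u0E [X in _ = _ + q * X]v1E; ring.
Qed.

Lemma span2_of_entries_comaximal :
  u0 * v1 = v0 * u1 -> entries_comaximal ->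
  span2 s0 s1 (vec2 u0 u1) /\ span2 s0 s1 (vec2 v0 v1).
Proof.
move=> det0 [Ux [Vx [Uw [Vw E]]]]; split.
- exists (Ux * u0 + Uw * u1), (Vx * u0 + Vw * u1).
  by rewrite !vec2_lincomb; congr vec2; rewrite -[LHS]mulr1 -E; ring: det0.
- exists (Ux * v0 + Uw * v1), (Vx * v0 + Vw * v1).
  by rewrite !vec2_lincomb; congr vec2; rewrite -[LHS]mulr1 -E; ring: det0.
Qed.

Lemma generates2_vec2P :
  u0 * v1 = v0 * u1 -> comaximal u0 v1 ->
  generates2 s0 s1 (vec2 u0 u1) (vec2 v0 v1) <-> entries_comaximal.
Proof.
move=> det0 comax; rewrite generates2_lincombP; split.
- by case; apply: entries_comaximal_of_span2.
- exact: span2_of_entries_comaximal.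
Qed.

End TwoGenerators.

Lemma xq_add_wq (k : fieldType) : xq k + wq k = 1.
Proof.
rewrite /xq /wq -rmorphD -(rmorph1 (\pi_(Rq k))); apply/eqP.
by rewrite -Quotient.idealrBE; apply/relIP; exists 1, 0; ring.
Qed.

Lemma xq_mul_wq (k : fieldType) : xq k * wq k = yq k * zq k.
Proof.
rewrite /xq /wq /yq /zq -!rmorphM; apply/eqP.
by rewrite -Quotient.idealrBE; apply/relIP; exists 0, 1; ring.
Qed.

Lemma comaximal_xq_wq (k : fieldType) : comaximal (xq k) (wq k).
Proof. by exists 1, 1; rewrite !mul1r xq_add_wq. Qed.

Theorem proposition2p26 (k : fieldType) (n : nat) (hn : (1 <= n)%N)
    (a0 a1 b0 b1 : Rq k) :
  let x := xq k in let y := yq k in let z := zq k in let w := wq k in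
  (generates2
     (a0 *: Pgen1 k n + a1 *: Pgen2 k n) (b0 *: Pgen1 k n + b1 *: Pgen2 k n)
     (Pgen1 k n) (Pgen2 k n)
   <-> exists Ux Vx Uw Vw : Rq k,
       Ux * (x ^+ n * a0 + y ^+ n * a1) + Vx * (x ^+ n * b0 + y ^+ n * b1)
       + Uw * (z ^+ n * a0 + w ^+ n * a1) + Vw * (z ^+ n * b0 + w ^+ n * b1)
       = 1)
  /\
  (generates2
     (a0 *: Qgen1 k n + a1 *: Qgen2 k n) (b0 *: Qgen1 k n + b1 *: Qgen2 k n)
     (Qgen1 k n) (Qgen2 k n)
   <-> exists Ux Vx Uw Vw : Rq k,
       Ux * (x ^+ n * a0 + z ^+ n * a1) + Vx * (x ^+ n * b0 + z ^+ n * b1)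
       + Uw * (y ^+ n * a0 + w ^+ n * a1) + Vw * (y ^+ n * b0 + w ^+ n * b1)
       = 1).
Proof.
move=> x y z w.
have comax : comaximal (x ^+ n) (w ^+ n) := comaximal_expr n n (comaximal_xq_wq k).
have det0 : x ^+ n * w ^+ n = y ^+ n * z ^+ n by rewrite -!exprMn xq_mul_wq.
split; apply: generates2_vec2P => //.
by rewrite det0 mulrC.
Qed.
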